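(* Let $n,M$ be positive integers and $\epsilon\in[0,1]$. Every $(n,M,\epsilon)$-FLF code for the CM-DMBC, with encoding functions $f_1,\dots,f_n$, satisfies, for every $\lambda>0$, $$\epsilon\ \ge\ \frac12\,\mathbb P\Big[\sum_{k=1}^2\eta_k\sum_{i=1}^n \imath_{P^*,W_k}\big(f_i(J,Y_1^{i-1},Y_2^{i-1});Y_{k,i}\big)\le \log M-\lambda\Big]-e^{-\lambda},$$ where the probability is computed under the distribution $$\mathbb P_{J,Y_1^n,Y_2^n}(j,y_1^n,y_2^n)=\frac1M\prod_{i=1}^n\prod_{k=1}^2 W_k\big(y_{k,i}\,\big|\,f_i(j,y_1^{i-1},y_2^{i-1})\big).$$
   Context: Setting: finite alphabets $\mathcal X=\{1,\dots,N\}$, $\mathcal Y$; transition matrices $W_1,W_2$ from $\mathcal X$ to $\mathcal Y$. The common-message discrete memoryless broadcast channel (CM-DMBC) has, at each time, outputs $(y_1,y_2)$ with probability $W_1(y_1|x)W_2(y_2|x)$ given input $x$, independently over time. For a distribution $P$ on $\mathcal X$: $PW_k(y)=\sum_xP(x)W_k(y|x)$, $\imath_{P,W_k}(x;y)=\log\frac{W_k(y|x)}{PW_k(y)}$ (natural log), $I_k(P)=\sum_xP(x)D(W_k(\cdot|x)\|PW_k)$, $V_k(P)=\sum_xP(x)\mathrm{Var}[\imath_{P,W_k}(x;Y_k)]$ with $Y_k\sim W_k(\cdot|x)$. $C=\max_P\min_kI_k(P)$, $C_k=\max_PI_k(P)$. Standing assumptions: the maximizer $P^*$ of $\min_kI_k$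 is unique, $P^*(x)>0$ for all $x$, $V_k(P^* )>0$ and $C_k>C$ for $k=1,2$. Let $P^*_{Y_k}=P^*W_k$ and for $\mathbf v\in\mathbb R^N$ with entries summing to zero, $\mathrm dI_k(\mathbf v)=\sum_xv_xD(W_k(\cdot|x)\|P^*_{Y_k})$. $\eta\in(0,1)$ is the unique constant with $\eta\,\mathrm dI_1(\mathbf v)+(1-\eta)\mathrm dI_2(\mathbf v)=0$ for all such $\mathbf v$; $\eta_1=\eta$, $\eta_2=1-\eta$. An $(n,M,\epsilon)$-FLF (fixed-length feedback) code consists of encoding functions $f_i:\{1,\dots,M\}\times\mathcal Y^{i-1}\times\mathcal Y^{i-1}\to\mathcal X$, $i=1,\dots,n$, producing $X_i=f_i(J,Y_1^{i-1},Y_2^{i-1})$ where the message $J$ is uniform on $\{1,\dots,M\}$, and decoders $g_k:\mathcal Y^n\to\{1,\dots,M\}$ with $\mathbb P[g_k(Y_k^n)\ne J]\le\epsilon$ for $k=1,2$. *)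

From Stdlib Require Import Reals List Arith.
Import ListNotations.
Open Scope R_scope.

(* Finite alphabets are {0,...,Nx-1} (inputs) and {0,...,Ny-1} (outputs).
   A channel is W : nat -> nat -> R with  W x y = W(y|x). *)

Fixpoint sumN (K : nat) (f : nat -> R) : R :=
  match K with O => 0 | S k => sumN k f + f k end.

Fixpoint prodN (K : nat) (f : nat -> R) : R :=
  match K with O => 1 | S k => prodN k f * f k end.

Definition sumL {A : Type} (l : list A) (f : A -> R) : R :=
  fold_right (fun a acc => f a + acc) 0 l.

Fixpoint seqs (Ny n : nat) : list (list nat) :=
  match n with
  | O => [nil]
  | S m => flat_map (fun s => map (fun y => s ++ [y]) (seq 0 Ny)) (seqs Ny m)
  end.

Definition is_channel (Nx Ny : nat) (W : nat -> nat -> R) : Prop :=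
  forall x, (x < Nx)%nat ->
    (forall y, (y < Ny)%nat -> 0 <= W x y) /\ sumN Ny (fun y => W x y) = 1.

Definition is_dist (Nx : nat) (P : nat -> R) : Prop :=
  (forall x, (x < Nx)%nat -> 0 <= P x) /\ sumN Nx P = 1.

Definition outdist (Nx : nat) (W : nat -> nat -> R) (P : nat -> R) (y : nat) : R :=
  sumN Nx (fun x => P x * W x y).

Definition info_density (Nx : nat) (W : nat -> nat -> R) (P : nat -> R)
  (x y : nat) : R := ln (W x y / outdist Nx W P y).

(* D(Wx || Q) ; terms with Wx y = 0 contribute 0 *)
Definition relent (Ny : nat) (Wx : nat -> R) (Q : nat -> R) : R :=
  sumN Ny (fun y => Wx y * ln (Wx y / Q y)).

Definition mutinf (Nx Ny : nat) (W : nat -> nat -> R) (P : nat -> R) : R :=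
  sumN Nx (fun x => P x * relent Ny (W x) (outdist Nx W P)).

Definition condvar (Nx Ny : nat) (W : nat -> nat -> R) (P : nat -> R) : R :=
  sumN Nx (fun x => P x *
    (sumN Ny (fun y => W x y * (info_density Nx W P x y) ^ 2)
     - (sumN Ny (fun y => W x y * info_density Nx W P x y)) ^ 2)).

Definition dI (Nx Ny : nat) (W : nat -> nat -> R) (Pstar : nat -> R)
  (v : nat -> R) : R :=
  sumN Nx (fun x => v x * relent Ny (W x) (outdist Nx W Pstar)).

Definition standing_assumptions (Nx Ny : nat) (W1 W2 : nat -> nat -> R)
  (Pstar : nat -> R) (eta : R) : Prop :=
  (1 <= Nx)%nat /\ (1 <= Ny)%nat /\
  is_channel Nx Ny W1 /\ is_channel Nx Ny W2 /\
  is_dist Nx Pstar /\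
  (forall P, is_dist Nx P ->
     Rmin (mutinf Nx Ny W1 P) (mutinf Nx Ny W2 P)
       <= Rmin (mutinf Nx Ny W1 Pstar) (mutinf Nx Ny W2 Pstar) /\
     (Rmin (mutinf Nx Ny W1 P) (mutinf Nx Ny W2 P)
        = Rmin (mutinf Nx Ny W1 Pstar) (mutinf Nx Ny W2 Pstar) ->
      forall x, (x < Nx)%nat -> P x = Pstar x)) /\
  (forall x, (x < Nx)%nat -> 0 < Pstar x) /\
  0 < condvar Nx Ny W1 Pstar /\ 0 < condvar Nx Ny W2 Pstar /\
  (* C_k = max_P I_k(P) > C = min_k I_k(Pstar) *)
  (exists P, is_dist Nx P /\
     mutinf Nx Ny W1 P > Rmin (mutinf Nx Ny W1 Pstar) (mutinf Nx Ny W2 Pstar)) /\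
  (exists P, is_dist Nx P /\
     mutinf Nx Ny W2 P > Rmin (mutinf Nx Ny W1 Pstar) (mutinf Nx Ny W2 Pstar)) /\
  0 < eta < 1 /\
  (forall v : nat -> R, sumN Nx v = 0 ->
     eta * dI Nx Ny W1 Pstar v + (1 - eta) * dI Nx Ny W2 Pstar v = 0).

(* Encoders: f i j p1 p2 = f_{i+1}(j, y1^{i}, y2^{i}), i = 0..n-1,
   where p1, p2 are the output prefixes of length i.  Messages j = 0..M-1. *)
Definition joint_pmf (n M : nat) (W1 W2 : nat -> nat -> R)
  (f : nat -> nat -> list nat -> list nat -> nat)
  (j : nat) (y1 y2 : list nat) : R :=
  / INR M * prodN n (fun i =>
      let x := f i j (firstn i y1) (firstn i y2) in
      W1 x (nth i y1 O) * W2 x (nth i y2 O)).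

Definition prob (Ny n M : nat) (W1 W2 : nat -> nat -> R)
  (f : nat -> nat -> list nat -> list nat -> nat)
  (E : nat -> list nat -> list nat -> bool) : R :=
  sumN M (fun j => sumL (seqs Ny n) (fun y1 => sumL (seqs Ny n) (fun y2 =>
     if E j y1 y2 then joint_pmf n M W1 W2 f j y1 y2 else 0))).

Definition is_FLF_code (Nx Ny : nat) (W1 W2 : nat -> nat -> R) (n M : nat)
  (eps : R) (f : nat -> nat -> list nat -> list nat -> nat)
  (g1 g2 : list nat -> nat) : Prop :=
  (forall i j p1 p2, (i < n)%nat -> (j < M)%nat ->
     length p1 = i -> length p2 = i ->
     Forall (fun y => (y < Ny)%nat) p1 -> Forall (fun y => (y < Ny)%nat) p2 ->
     (f i j p1 p2 < Nx)%nat) /\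
  prob Ny n M W1 W2 f (fun j y1 y2 => negb (Nat.eqb (g1 y1) j)) <= eps /\
  prob Ny n M W1 W2 f (fun j y1 y2 => negb (Nat.eqb (g2 y2) j)) <= eps.

Definition weighted_density (Nx n : nat) (W1 W2 : nat -> nat -> R)
  (Pstar : nat -> R) (eta : R)
  (f : nat -> nat -> list nat -> list nat -> nat)
  (j : nat) (y1 y2 : list nat) : R :=
  eta * sumN n (fun i =>
          info_density Nx W1 Pstar (f i j (firstn i y1) (firstn i y2)) (nth i y1 O))
  + (1 - eta) * sumN n (fun i =>
          info_density Nx W2 Pstar (f i j (firstn i y1) (firstn i y2)) (nth i y2 O)).

Definition Rleb (a b : R) : bool := if Rle_dec a b then true else false.

From Stdlib Require Import Reals List Lra Lia Bool.
Import ListNotations.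
Open Scope R_scope.

(* For one receiver, a change of measure from the code's joint law to
   (1/M) (P* W_1)^n x (the causal kernel of the other output) shows that
   P[i_1^n <= log M - lambda, g_1(Y_1^n) = J] <= e^{-lambda}: on that event
   the likelihood ratio is at most M e^{-lambda}, the other receiver's outputs
   integrate out because the encoder is causal, and each Y_1^n is decoded to
   a single message.  Hence P[i_k^n <= log M - lambda] <= eps + e^{-lambda}
   for k = 1, 2.  A convex combination of i_1^n and i_2^n can only be below
   the threshold if one of them is, and the union bound gives the theorem. *)

Lemma sumN_ext K f g : (forall i, (i < K)%nat -> f i = g i) -> sumN K f = sumN K g.
Proof.
  induction K as [|K IH]; simpl; intros H; auto.
  rewrite IH, H; [reflexivity|lia|intros; apply H; lia].
Qed.

Lemma sumN_le K f g : (forall i, (i < K)%nat -> f i <= g i) -> sumN K f <= sumN K g.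
Proof.
  induction K as [|K IH]; simpl; intros H; [lra|].
  apply Rplus_le_compat; [apply IH; intros; apply H|apply H]; lia.
Qed.

Lemma sumN_add K f g : sumN K (fun i => f i + g i) = sumN K f + sumN K g.
Proof. induction K as [|K IH]; simpl; [lra|]. rewrite IH; lra. Qed.

Lemma sumN_scal K c f : sumN K (fun i => c * f i) = c * sumN K f.
Proof. induction K as [|K IH]; simpl; [lra|]. rewrite IH; lra. Qed.

Lemma sumN_comm K L (F : nat -> nat -> R) :
  sumN K (fun i => sumN L (F i)) = sumN L (fun j => sumN K (fun i => F i j)).
Proof.
  induction K as [|K IH]; simpl.
  - induction L; simpl; lra.
  - rewrite IH, <- sumN_add; reflexivity.
Qed.

Lemma sumN_nonneg K f : (forall i, (i < K)%nat -> 0 <= f i) -> 0 <= sumN K f.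
Proof.
  intros H. apply Rle_trans with (sumN K (fun _ => 0)).
  - clear H; induction K as [|K IH]; simpl; lra.
  - apply sumN_le; exact H.
Qed.

Lemma sumN_ge_term K f k :
  (forall i, (i < K)%nat -> 0 <= f i) -> (k < K)%nat -> f k <= sumN K f.
Proof.
  induction K as [|K IH]; simpl; intros H Hk; [lia|].
  assert (0 <= sumN K f) by (apply sumN_nonneg; intros; apply H; lia).
  destruct (Nat.eq_dec k K) as [->|Hne]; [lra|].
  assert (f k <= sumN K f) by (apply IH; [intros; apply H|]; lia).
  assert (0 <= f K) by (apply H; lia). lra.
Qed.

Lemma sumN_indicator_le M k c :
  0 <= c -> sumN M (fun j => if Nat.eqb k j then c else 0) <= c.
Proof.
  intros Hc. induction M as [|M IH]; simpl; [lra|].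
  destruct (Nat.eqb_spec k M) as [->|Hne]; [|lra].
  rewrite (sumN_ext M _ (fun _ => 0)), <- (Rmult_0_l 0), sumN_scal; [lra|].
  intros j Hj. destruct (Nat.eqb_spec M j); [lia|reflexivity].
Qed.

Lemma sumL_ext {A} (l : list A) f g : (forall a, In a l -> f a = g a) -> sumL l f = sumL l g.
Proof. induction l; simpl; intros H; auto. rewrite IHl, H by auto; reflexivity. Qed.

Lemma sumL_le {A} (l : list A) f g : (forall a, In a l -> f a <= g a) -> sumL l f <= sumL l g.
Proof. induction l; simpl; intros H; [lra|]. apply Rplus_le_compat; auto. Qed.

Lemma sumL_add {A} (l : list A) f g : sumL l (fun a => f a + g a) = sumL l f + sumL l g.
Proof. induction l; simpl; [lra|]. rewrite IHl; lra. Qed.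

Lemma sumL_scal {A} (l : list A) c f : sumL l (fun a => c * f a) = c * sumL l f.
Proof. induction l; simpl; [lra|]. rewrite IHl; lra. Qed.

Lemma sumL_zero {A} (l : list A) : sumL l (fun _ => 0) = 0.
Proof. induction l; simpl; [lra|]. rewrite IHl; lra. Qed.

Lemma sumL_app {A} (l1 l2 : list A) f : sumL (l1 ++ l2) f = sumL l1 f + sumL l2 f.
Proof. induction l1; simpl; [lra|]. rewrite IHl1; lra. Qed.

Lemma sumL_map {A B} (h : A -> B) l f : sumL (map h l) f = sumL l (fun a => f (h a)).
Proof. induction l; simpl; auto. rewrite IHl; reflexivity. Qed.

Lemma sumL_flat_map {A B} (h : A -> list B) l f :
  sumL (flat_map h l) f = sumL l (fun a => sumL (h a) f).
Proof. induction l; simpl; auto. rewrite sumL_app, IHl; reflexivity. Qed.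

Lemma sumL_seq K f : sumL (seq 0 K) f = sumN K f.
Proof. induction K; [reflexivity|]. rewrite seq_S, sumL_app, IHK. simpl. lra. Qed.

Lemma sumL_comm {A B} (l1 : list A) (l2 : list B) F :
  sumL l1 (fun a => sumL l2 (F a)) = sumL l2 (fun b => sumL l1 (fun a => F a b)).
Proof.
  induction l1; simpl.
  - rewrite sumL_zero; reflexivity.
  - rewrite IHl1, <- sumL_add; reflexivity.
Qed.

Lemma sumN_sumL_comm {A} K (l : list A) F :
  sumN K (fun i => sumL l (F i)) = sumL l (fun a => sumN K (fun i => F i a)).
Proof.
  induction K; simpl.
  - rewrite sumL_zero; reflexivity.
  - rewrite IHK, <- sumL_add; reflexivity.
Qed.

Lemma prodN_ext K f g : (forall i, (i < K)%nat -> f i = g i) -> prodN K f = prodN K g.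
Proof.
  induction K as [|K IH]; simpl; intros H; auto.
  rewrite IH, H; [reflexivity|lia|intros; apply H; lia].
Qed.

Lemma prodN_mul K f g : prodN K (fun i => f i * g i) = prodN K f * prodN K g.
Proof. induction K as [|K IH]; simpl; [lra|]. rewrite IH; lra. Qed.

Lemma prodN_nonneg K f : (forall i, (i < K)%nat -> 0 <= f i) -> 0 <= prodN K f.
Proof.
  induction K as [|K IH]; simpl; intros H; [lra|].
  apply Rmult_le_pos; [apply IH; intros; apply H|apply H]; lia.
Qed.

Lemma prodN_pos K f : (forall i, (i < K)%nat -> 0 < f i) -> 0 < prodN K f.
Proof.
  induction K as [|K IH]; simpl; intros H; [lra|].
  apply Rmult_lt_0_compat; [apply IH; intros; apply H|apply H]; lia.
Qed.

Lemma prodN_eq0_or_all_pos K f :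
  (forall i, (i < K)%nat -> 0 <= f i) ->
  prodN K f = 0 \/ (forall i, (i < K)%nat -> 0 < f i).
Proof.
  induction K as [|K IH]; simpl; intros H; [right; intros; lia|].
  destruct IH as [Z|Pos]; [intros; apply H; lia|left; rewrite Z; ring|].
  destruct (Rle_lt_or_eq_dec 0 (f K)) as [p|e]; [apply H; lia| |left; rewrite <- e; ring].
  right. intros i Hi. destruct (Nat.eq_dec i K) as [->|]; [exact p|apply Pos; lia].
Qed.

Lemma ln_prodN K f :
  (forall i, (i < K)%nat -> 0 < f i) -> ln (prodN K f) = sumN K (fun i => ln (f i)).
Proof.
  induction K as [|K IH]; simpl; intros H; [apply ln_1|].
  rewrite ln_mult, IH; [reflexivity|intros; apply H; lia|apply prodN_pos; intros; apply H; lia|apply H; lia].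
Qed.

Lemma prodN_le_exp_mul_prodN K a q c :
  (forall i, (i < K)%nat -> 0 <= a i) -> (forall i, (i < K)%nat -> 0 <= q i) ->
  (forall i, (i < K)%nat -> 0 < a i -> 0 < q i) ->
  sumN K (fun i => ln (a i / q i)) <= c -> prodN K a <= exp c * prodN K q.
Proof.
  intros Ha Hq Haq Hc.
  destruct (prodN_eq0_or_all_pos K a Ha) as [Z|Apos].
  { rewrite Z. apply Rmult_le_pos; [apply Rlt_le, exp_pos|apply prodN_nonneg; exact Hq]. }
  assert (Qpos : forall i, (i < K)%nat -> 0 < q i) by auto.
  assert (Rpos : forall i, (i < K)%nat -> 0 < a i / q i)
    by (intros; apply Rdiv_lt_0_compat; auto).
  assert (Hratio : prodN K (fun i => a i / q i) <= exp c).
  { rewrite <- ln_prodN in Hc by exact Rpos.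
    rewrite <- (exp_ln (prodN K _)) by (apply prodN_pos; exact Rpos).
    destruct (Rle_lt_or_eq_dec _ _ Hc) as [Hlt|Heq];
      [apply Rlt_le, exp_increasing, Hlt|rewrite Heq; lra]. }
  replace (prodN K a) with (prodN K (fun i => a i / q i) * prodN K q).
  - apply Rmult_le_compat_r; [apply prodN_nonneg|]; assumption.
  - rewrite <- prodN_mul. apply prodN_ext. intros i Hi.
    field. apply Rgt_not_eq, Qpos, Hi.
Qed.

Lemma seqs_spec Ny m s :
  In s (seqs Ny m) -> length s = m /\ Forall (fun y => (y < Ny)%nat) s.
Proof.
  revert s; induction m as [|m IH]; simpl; intros s H.
  - destruct H as [<-|[]]. simpl. auto.
  - apply in_flat_map in H as [s' [Hs' Hs]]. apply in_map_iff in Hs as [y [<- Hy]].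
    apply in_seq in Hy. destruct (IH s' Hs') as [L F].
    rewrite length_app; simpl. split; [lia|].
    apply Forall_app; split; [exact F|repeat constructor; lia].
Qed.

Lemma seqs_nth_lt Ny m s i : In s (seqs Ny m) -> (i < m)%nat -> (nth i s O < Ny)%nat.
Proof.
  intros Hs Hi. destruct (seqs_spec _ _ _ Hs) as [L F].
  rewrite Forall_forall in F. apply F, nth_In. lia.
Qed.

Lemma seqs_firstn_spec Ny m s i :
  In s (seqs Ny m) -> (i <= m)%nat ->
  length (firstn i s) = i /\ Forall (fun y => (y < Ny)%nat) (firstn i s).
Proof.
  intros Hs Hi. destruct (seqs_spec _ _ _ Hs) as [L F]. split.
  - apply firstn_length_le. lia.
  - rewrite <- (firstn_skipn i s) in F. apply Forall_app in F. tauto.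
Qed.

Lemma firstn_app_last (s : list nat) y i :
  (i <= length s)%nat -> firstn i (s ++ [y]) = firstn i s.
Proof.
  intros Hi. rewrite firstn_app. replace (i - length s)%nat with O by lia.
  apply app_nil_r.
Qed.

Lemma seqs_causal_kernel_mass Ny (q : nat -> list nat -> nat -> R) m :
  (forall i s, (i < m)%nat -> In s (seqs Ny i) -> sumN Ny (q i s) = 1) ->
  sumL (seqs Ny m) (fun y => prodN m (fun i => q i (firstn i y) (nth i y O))) = 1.
Proof.
  induction m as [|m IH]; intros Hq; [simpl; lra|].
  simpl seqs. rewrite sumL_flat_map, <- IH by (intros; apply Hq; [lia|assumption]).
  apply sumL_ext. intros s Hs. destruct (seqs_spec _ _ _ Hs) as [Ls _].
  rewrite sumL_map.
  transitivity (sumL (seq 0 Ny)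
    (fun y => prodN m (fun i => q i (firstn i s) (nth i s O)) * q m s y)).
  - apply sumL_ext. intros y _. simpl prodN. f_equal.
    + apply prodN_ext. intros i Hi.
      rewrite firstn_app_last, app_nth1 by lia. reflexivity.
    + rewrite firstn_app_last, <- Ls, firstn_all, nth_middle by lia. reflexivity.
  - rewrite sumL_scal, sumL_seq, Hq by (assumption || lia). ring.
Qed.

Lemma outdist_sum Nx Ny W P :
  is_channel Nx Ny W -> is_dist Nx P -> sumN Ny (outdist Nx W P) = 1.
Proof.
  intros HW [_ HP]. unfold outdist.
  rewrite (sumN_comm Ny Nx (fun y x => P x * W x y)), <- HP.
  apply sumN_ext. intros x Hx.
  rewrite sumN_scal. replace (sumN Ny (W x)) with 1 by (symmetry; apply HW, Hx). ring.
Qed.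

Lemma outdist_nonneg Nx Ny W P y :
  is_channel Nx Ny W -> is_dist Nx P -> (y < Ny)%nat -> 0 <= outdist Nx W P y.
Proof.
  intros HW [HP _] Hy. apply sumN_nonneg. intros x Hx.
  apply Rmult_le_pos; [apply HP|apply (proj1 (HW x Hx))]; assumption.
Qed.

Lemma outdist_pos Nx Ny W P x y :
  is_channel Nx Ny W -> is_dist Nx P -> (forall x, (x < Nx)%nat -> 0 < P x) ->
  (x < Nx)%nat -> (y < Ny)%nat -> 0 < W x y -> 0 < outdist Nx W P y.
Proof.
  intros HW [HP _] HPpos Hx Hy Hw.
  apply Rlt_le_trans with (P x * W x y); [apply Rmult_lt_0_compat; auto|].
  apply (sumN_ge_term Nx (fun x => P x * W x y)); [|exact Hx].
  intros x' Hx'. apply Rmult_le_pos; [apply HP|apply (proj1 (HW x' Hx'))]; assumption.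
Qed.

Definition encoder_admissible (Nx Ny n M : nat)
  (f : nat -> nat -> list nat -> list nat -> nat) : Prop :=
  forall i j p1 p2, (i < n)%nat -> (j < M)%nat ->
    length p1 = i -> length p2 = i ->
    Forall (fun y => (y < Ny)%nat) p1 -> Forall (fun y => (y < Ny)%nat) p2 ->
    (f i j p1 p2 < Nx)%nat.

Definition swap_encoder (f : nat -> nat -> list nat -> list nat -> nat) :
  nat -> nat -> list nat -> list nat -> nat :=
  fun i j p1 p2 => f i j p2 p1.

Definition info_density_sum (Nx n : nat) (W : nat -> nat -> R) (P : nat -> R)
  (f : nat -> nat -> list nat -> list nat -> nat) (j : nat) (y1 y2 : list nat) : R :=
  sumN n (fun i => info_density Nx W P (f i j (firstn i y1) (firstn i y2)) (nth i y1 O)).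

Lemma encoder_admissible_swap Nx Ny n M f :
  encoder_admissible Nx Ny n M f -> encoder_admissible Nx Ny n M (swap_encoder f).
Proof. intros Hf i j p1 p2 **. apply Hf; assumption. Qed.

Lemma prob_swap Ny n M W1 W2 f E :
  prob Ny n M W1 W2 f E = prob Ny n M W2 W1 (swap_encoder f) (fun j y2 y1 => E j y1 y2).
Proof.
  unfold prob. apply sumN_ext. intros j _. rewrite sumL_comm.
  apply sumL_ext. intros y2 _. apply sumL_ext. intros y1 _.
  destruct (E j y1 y2); [|reflexivity].
  unfold joint_pmf. f_equal. apply prodN_ext. intros i _. apply Rmult_comm.
Qed.

Lemma Rleb_iff a b : Rleb a b = true <-> a <= b.
Proof. unfold Rleb. destruct (Rle_dec a b); split; congruence || tauto. Qed.

Section ChangeOfMeasure.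

Variables (Nx Ny n M : nat) (W1 W2 : nat -> nat -> R) (Pstar : nat -> R).
Variable f : nat -> nat -> list nat -> list nat -> nat.
Hypotheses (HW1 : is_channel Nx Ny W1) (HW2 : is_channel Nx Ny W2).
Hypotheses (HP : is_dist Nx Pstar) (HPpos : forall x, (x < Nx)%nat -> 0 < Pstar x).
Hypothesis Hf : encoder_admissible Nx Ny n M f.

Lemma encoder_lt j i y1 p2 :
  (j < M)%nat -> (i < n)%nat -> In y1 (seqs Ny n) ->
  length p2 = i -> Forall (fun y => (y < Ny)%nat) p2 ->
  (f i j (firstn i y1) p2 < Nx)%nat.
Proof.
  intros Hj Hi Hy1 L2 F2. destruct (seqs_firstn_spec Ny n y1 i Hy1) as [L1 F1]; [lia|].
  apply Hf; assumption.
Qed.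

Lemma encoder_lt_seqs j i y1 y2 :
  (j < M)%nat -> (i < n)%nat -> In y1 (seqs Ny n) -> In y2 (seqs Ny n) ->
  (f i j (firstn i y1) (firstn i y2) < Nx)%nat.
Proof.
  intros Hj Hi Hy1 Hy2. destruct (seqs_firstn_spec Ny n y2 i Hy2) as [L2 F2]; [lia|].
  apply encoder_lt; assumption.
Qed.

Lemma joint_pmf_nonneg j y1 y2 :
  (j < M)%nat -> In y1 (seqs Ny n) -> In y2 (seqs Ny n) ->
  0 <= joint_pmf n M W1 W2 f j y1 y2.
Proof.
  intros Hj Hy1 Hy2. unfold joint_pmf. apply Rmult_le_pos.
  - apply Rlt_le, Rinv_0_lt_compat, lt_0_INR. lia.
  - apply prodN_nonneg. intros i Hi.
    pose proof (encoder_lt_seqs j i y1 y2 Hj Hi Hy1 Hy2) as Hx.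
    apply Rmult_le_pos; [apply (proj1 (HW1 _ Hx))|apply (proj1 (HW2 _ Hx))];
      eapply seqs_nth_lt; eassumption.
Qed.

Lemma prob_le_union E F1 F2 :
  (forall j y1 y2, (j < M)%nat -> In y1 (seqs Ny n) -> In y2 (seqs Ny n) ->
     E j y1 y2 = true -> F1 j y1 y2 = true \/ F2 j y1 y2 = true) ->
  prob Ny n M W1 W2 f E <= prob Ny n M W1 W2 f F1 + prob Ny n M W1 W2 f F2.
Proof.
  intros H. unfold prob. rewrite <- sumN_add. apply sumN_le. intros j Hj.
  rewrite <- sumL_add. apply sumL_le. intros y1 Hy1.
  rewrite <- sumL_add. apply sumL_le. intros y2 Hy2.
  pose proof (joint_pmf_nonneg j y1 y2 Hj Hy1 Hy2).
  specialize (H j y1 y2 Hj Hy1 Hy2).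
  destruct (E j y1 y2), (F1 j y1 y2), (F2 j y1 y2); lra.
Qed.

Lemma joint_pmf_le_tilted lambda j y1 y2 :
  (j < M)%nat -> In y1 (seqs Ny n) -> In y2 (seqs Ny n) ->
  info_density_sum Nx n W1 Pstar f j y1 y2 <= ln (INR M) - lambda ->
  joint_pmf n M W1 W2 f j y1 y2 <=
    exp (- lambda) * prodN n (fun i => outdist Nx W1 Pstar (nth i y1 O))
      * prodN n (fun i => W2 (f i j (firstn i y1) (firstn i y2)) (nth i y2 O)).
Proof.
  intros Hj Hy1 Hy2 Hdens.
  assert (HM : 0 < INR M) by (apply lt_0_INR; lia).
  set (b := prodN n (fun i => W2 (f i j (firstn i y1) (firstn i y2)) (nth i y2 O))).
  assert (Hb : 0 <= b).
  { apply prodN_nonneg. intros i Hi. pose proof (encoder_lt_seqs j i y1 y2 Hj Hi Hy1 Hy2).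
    apply (proj1 (HW2 _ H)). eapply seqs_nth_lt; eassumption. }
  assert (Hratio : prodN n (fun i => W1 (f i j (firstn i y1) (firstn i y2)) (nth i y1 O))
       <= exp (ln (INR M) - lambda) * prodN n (fun i => outdist Nx W1 Pstar (nth i y1 O))).
  { apply prodN_le_exp_mul_prodN; [intros i Hi..|exact Hdens];
      pose proof (encoder_lt_seqs j i y1 y2 Hj Hi Hy1 Hy2);
      pose proof (seqs_nth_lt Ny n y1 i Hy1 Hi).
    - apply (proj1 (HW1 _ H)); assumption.
    - apply (outdist_nonneg Nx Ny); assumption.
    - intros; apply (outdist_pos Nx Ny W1 Pstar (f i j (firstn i y1) (firstn i y2))); assumption. }
  unfold Rminus in Hratio. rewrite exp_plus, exp_ln in Hratio by exact HM.
  unfold joint_pmf. rewrite prodN_mul. fold b.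
  apply Rle_trans with (/ INR M * (INR M * exp (- lambda)
     * prodN n (fun i => outdist Nx W1 Pstar (nth i y1 O)) * b)).
  - apply Rmult_le_compat_l; [apply Rlt_le, Rinv_0_lt_compat, HM|].
    apply Rmult_le_compat_r; assumption.
  - right. field. lra.
Qed.

Lemma prodN_outdist_nonneg y1 :
  In y1 (seqs Ny n) -> 0 <= prodN n (fun i => outdist Nx W1 Pstar (nth i y1 O)).
Proof.
  intros Hy1. apply prodN_nonneg. intros i Hi.
  apply (outdist_nonneg Nx Ny); [assumption..|eapply seqs_nth_lt; eassumption].
Qed.

Lemma sumL_joint_pmf_info_density_le_correct (g : list nat -> nat) lambda j y1 :
  (j < M)%nat -> In y1 (seqs Ny n) ->
  sumL (seqs Ny n) (fun y2 =>
    if Rleb (info_density_sum Nx n W1 Pstar f j y1 y2) (ln (INR M) - lambda)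
         && Nat.eqb (g y1) j
    then joint_pmf n M W1 W2 f j y1 y2 else 0)
  <= if Nat.eqb (g y1) j
     then exp (- lambda) * prodN n (fun i => outdist Nx W1 Pstar (nth i y1 O)) else 0.
Proof.
  intros Hj Hy1. destruct (Nat.eqb (g y1) j).
  2: { rewrite (sumL_ext _ _ (fun _ => 0)), sumL_zero; [lra|].
       intros y2 _. rewrite andb_false_r. reflexivity. }
  (* The second output sequence integrates out along the causal encoder. *)
  assert (Hmarg : sumL (seqs Ny n) (fun y2 =>
      prodN n (fun i => W2 (f i j (firstn i y1) (firstn i y2)) (nth i y2 O))) = 1).
  { apply (seqs_causal_kernel_mass Ny (fun i s y => W2 (f i j (firstn i y1) s) y)).
    intros i s Hi Hs. destruct (seqs_spec _ _ _ Hs) as [L F].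
    exact (proj2 (HW2 _ (encoder_lt j i y1 s Hj Hi Hy1 L F))). }
  rewrite <- (Rmult_1_r (exp _ * _)), <- Hmarg, <- sumL_scal.
  apply sumL_le. intros y2 Hy2. rewrite andb_true_r.
  destruct (Rleb _ _) eqn:Hdens.
  - apply joint_pmf_le_tilted, Rleb_iff; assumption.
  - apply Rmult_le_pos.
    + apply Rmult_le_pos; [apply Rlt_le, exp_pos|apply prodN_outdist_nonneg, Hy1].
    + apply prodN_nonneg. intros i Hi.
      apply (proj1 (HW2 _ (encoder_lt_seqs j i y1 y2 Hj Hi Hy1 Hy2))).
      eapply seqs_nth_lt; eassumption.
Qed.

Lemma prob_info_density_le_correct (g : list nat -> nat) lambda :
  prob Ny n M W1 W2 f (fun j y1 y2 =>
    Rleb (info_density_sum Nx n W1 Pstar f j y1 y2) (ln (INR M) - lambda)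
      && Nat.eqb (g y1) j)
  <= exp (- lambda).
Proof.
  set (Q y1 := prodN n (fun i => outdist Nx W1 Pstar (nth i y1 O))).
  assert (Hiid : sumL (seqs Ny n) Q = 1).
  { apply (seqs_causal_kernel_mass Ny (fun _ _ y => outdist Nx W1 Pstar y)).
    intros. apply (outdist_sum Nx Ny); assumption. }
  unfold prob.
  apply Rle_trans with (sumN M (fun j => sumL (seqs Ny n) (fun y1 =>
      if Nat.eqb (g y1) j then exp (- lambda) * Q y1 else 0))).
  { apply sumN_le. intros j Hj. apply sumL_le. intros y1 Hy1.
    apply sumL_joint_pmf_info_density_le_correct; assumption. }
  rewrite sumN_sumL_comm.
  apply Rle_trans with (sumL (seqs Ny n) (fun y1 => exp (- lambda) * Q y1)).
  - apply sumL_le. intros y1 Hy1. apply sumN_indicator_le.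
    apply Rmult_le_pos; [apply Rlt_le, exp_pos|apply prodN_outdist_nonneg, Hy1].
  - rewrite sumL_scal, Hiid. lra.
Qed.

Lemma prob_info_density_le (g : list nat -> nat) eps lambda :
  prob Ny n M W1 W2 f (fun j y1 y2 => negb (Nat.eqb (g y1) j)) <= eps ->
  prob Ny n M W1 W2 f (fun j y1 y2 =>
    Rleb (info_density_sum Nx n W1 Pstar f j y1 y2) (ln (INR M) - lambda))
  <= eps + exp (- lambda).
Proof.
  intros Herr.
  pose proof (prob_info_density_le_correct g lambda) as Hcorrect.
  eapply Rle_trans; [|apply Rplus_le_compat; [exact Herr|exact Hcorrect]].
  apply prob_le_union. intros j y1 y2 _ _ _ ->. destruct (Nat.eqb (g y1) j); auto.
Qed.

End ChangeOfMeasure.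

Lemma convex_combination_le_cases eta a b c :
  0 < eta < 1 -> eta * a + (1 - eta) * b <= c -> a <= c \/ b <= c.
Proof. intros Heta H. destruct (Rle_dec a c); [left; assumption|right; nra]. Qed.

Theorem theorem1 (Nx Ny : nat) (W1 W2 : nat -> nat -> R) (Pstar : nat -> R)
  (eta : R) (n M : nat) (eps : R)
  (f : nat -> nat -> list nat -> list nat -> nat) (g1 g2 : list nat -> nat) :
  standing_assumptions Nx Ny W1 W2 Pstar eta ->
  (1 <= n)%nat -> (1 <= M)%nat -> 0 <= eps <= 1 ->
  is_FLF_code Nx Ny W1 W2 n M eps f g1 g2 ->
  forall lambda : R, 0 < lambda ->
  eps >= / 2 * prob Ny n M W1 W2 f
           (fun j y1 y2 => Rleb (weighted_density Nx n W1 W2 Pstar eta f j y1 y2)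
                                (ln (INR M) - lambda))
         - exp (- lambda).
Proof.
  intros SA _ _ _ [Hf [Herr1 Herr2]] lambda _.
  destruct SA as (_ & _ & HW1 & HW2 & HP & _ & HPpos & _ & _ & _ & _ & Heta & _).
  pose proof (prob_info_density_le Nx Ny n M W1 W2 Pstar f HW1 HW2 HP HPpos Hf
    g1 eps lambda Herr1) as Hrx1.
  (* Receiver 2 is receiver 1 of the code with the two outputs exchanged. *)
  assert (Hrx2 : prob Ny n M W1 W2 f (fun j y1 y2 =>
      Rleb (info_density_sum Nx n W2 Pstar (swap_encoder f) j y2 y1) (ln (INR M) - lambda))
    <= eps + exp (- lambda)).
  { rewrite prob_swap in Herr2 |- *.
    apply (prob_info_density_le Nx Ny n M W2 W1 Pstar (swap_encoder f) HW2 HW1 HP HPpos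
      (encoder_admissible_swap _ _ _ _ _ Hf) g2 eps lambda Herr2). }
  assert (Hunion : prob Ny n M W1 W2 f (fun j y1 y2 =>
      Rleb (weighted_density Nx n W1 W2 Pstar eta f j y1 y2) (ln (INR M) - lambda))
    <= prob Ny n M W1 W2 f (fun j y1 y2 =>
         Rleb (info_density_sum Nx n W1 Pstar f j y1 y2) (ln (INR M) - lambda))
       + prob Ny n M W1 W2 f (fun j y1 y2 =>
         Rleb (info_density_sum Nx n W2 Pstar (swap_encoder f) j y2 y1) (ln (INR M) - lambda))).
  { apply (prob_le_union Nx Ny); [assumption..|].
    intros j y1 y2 _ _ _ Hle. rewrite !Rleb_iff in *.
    apply (convex_combination_le_cases eta); assumption. }
  lra.
Qed.
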